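(* Let $b\ge 2$ and $k\ge 1$ be integers, set $B=b^k$, let $m\ge 1$ be an integer with $\gcd(m,b)=1$, and let $r$ be an integer with $0\le r<m$. Call an integer $s\ge 1$ admissible if $s\equiv r\pmod m$ and $\gcd(s,b)=1$. For admissible $s$, define $\omega_s:=\operatorname{ord}_{ms}(B)$ and $n_s:=\sum_{j=0}^{s-1} B^{j\omega_s}$. If $s$ and $s'$ are distinct admissible integers, then $n_s\neq n_{s'}$.
   Context: For integers $a$ and $N\ge 1$ with $\gcd(a,N)=1$, $\operatorname{ord}_N(a)$ denotes the least positive integer $\omega$ with $a^\omega\equiv 1\pmod N$ (so $\operatorname{ord}_1(a)=1$). *)

From mathcomp Require Import all_boot.
Set Implicit Arguments. Unset Strict Implicit. Unset Printing Implicit Defensive.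

(* For coprime a, N >= 1 such w exists and w <= N (indeed w <= totient N),
   so searching 1..N is exhaustive; we return 0 if no such w (non-coprime case,
   never used). Note ord 1 a = 1, since every a^w = 1 mod 1. *)
Definition ord (N a : nat) : nat :=
  let s := [seq w <- iota 1 N | a ^ w == 1 %[mod N]] in
  head 0 s.

Definition admissible (b m r s : nat) : Prop :=
  0 < s /\ s = r %[mod m] /\ coprime s b.

Definition n_of (B m s : nat) : nat :=
  \sum_(0 <= j < s) B ^ (j * ord (m * s) B).

From mathcomp Require Import all_boot cyclic.

(* Writing c = B^(omega_s) = b^u with u >= 1, n_s = 1 + c + ... + c^(s-1) is a
   geometric sum.  For s >= 2, n_s - 1 = b^u (1 + c + ... + c^(s-2)) and the
   second factor is 1 mod b, so n_s determines u, hence c; and for a fixed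
   ratio c >= 1 the geometric sum is strictly increasing in s. *)

Lemma totient_leq n : totient n <= n.
Proof.
rewrite totient_count_coprime (@leq_trans (\sum_(0 <= d < n) 1)) //.
  by apply: leq_sum => d _; apply: leq_b1.
by rewrite sum_nat_const_nat subn0 muln1.
Qed.

Lemma ord_gt0 N a : 0 < N -> coprime a N -> 0 < ord N a.
Proof.
move=> N_gt0 co_aN; rewrite /ord; set s := filter _ _.
have totient_s : totient N \in s.
  rewrite mem_filter Euler_exp_totient // eqxx mem_iota totient_gt0 N_gt0.
  by rewrite add1n ltnS totient_leq.
have : head 0 s \in s by case: s totient_s => // w s' _; apply: mem_head.
by rewrite mem_filter mem_iota => /andP[_ /andP[]].
Qed.

Definition geom_sum (c n : nat) : nat := \sum_(0 <= j < n) c ^ j.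

Lemma geom_sum_small c n : n <= 1 -> geom_sum c n = n.
Proof. by case: n => [|[|]] // _; rewrite /geom_sum ?big_nat1 ?big_geq. Qed.

Lemma geom_sumSr c n : geom_sum c n.+1 = geom_sum c n + c ^ n.
Proof. exact: big_nat_recr. Qed.

Lemma geom_sumS c n : geom_sum c n.+1 = 1 + c * geom_sum c n.
Proof.
rewrite /geom_sum big_nat_recl // big_distrr /=.
by congr (_ + _); apply: eq_bigr => j _; rewrite expnS.
Qed.

Lemma geom_sum_inj c : 0 < c -> injective (geom_sum c).
Proof.
move=> c_gt0; apply/incn_inj/leq_mono/(homo_ltn (r := fun i j => i < j) ltn_trans).
by move=> n; rewrite geom_sumSr -addn1 leq_add2l expn_gt0 c_gt0.
Qed.

Lemma geom_sum_ndvd b c n : 1 < b -> b %| c -> ~~ (b %| geom_sum c n.+1).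
Proof.
by move=> b_gt1 dvd_bc; rewrite geom_sumS dvdn_addl ?dvdn_mulr // dvdn1 gtn_eqF.
Qed.

Lemma eq_expn_mul_ndvd b u v x y : 0 < b -> ~~ (b %| x) -> ~~ (b %| y) ->
  b ^ u * x = b ^ v * y -> u = v.
Proof.
move=> b_gt0; wlog le_uv : u v x y / u <= v => [wlog_uv ndx ndy E | ndx _ E].
  have [le_uv | /ltnW le_vu] := leqP u v; first exact: wlog_uv le_uv ndx ndy E.
  exact/esym/(wlog_uv v u y x le_vu ndy ndx (esym E)).
apply/eqP; rewrite eqn_leq le_uv leqNgt; apply/negP => lt_uv.
rewrite -(subnKC le_uv) expnD -mulnA in E.
have {}E : x = b ^ (v - u) * y.
  by apply/eqP; rewrite -(@eqn_pmul2l (b ^ u)) ?expn_gt0 ?b_gt0 ?E.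
by move: ndx; rewrite E dvdn_mulr // dvdn_exp // ?subn_gt0.
Qed.

Lemma geom_sum_expn_inj b u v s t : 1 < b -> 0 < u -> 0 < v ->
  geom_sum (b ^ u) s = geom_sum (b ^ v) t -> s = t.
Proof.
move=> b_gt1; have pow_gt0 w : 0 < b ^ w by rewrite expn_gt0 ltnW.
wlog le_st : u v s t / s <= t => [wlog_st u_gt0 v_gt0 E | u_gt0 v_gt0].
  have [le_st | /ltnW le_ts] := leqP s t; first exact: wlog_st le_st u_gt0 v_gt0 E.
  exact/esym/(wlog_st v u t s le_ts v_gt0 u_gt0 (esym E)).
have [s_le1 | ] := leqP s 1.
  by rewrite geom_sum_small // -{1}(geom_sum_small (b ^ v) _ s_le1) => /geom_sum_inj->.
case: s t le_st => [|[|s]] [|[|t]] // _ _.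
rewrite geom_sumS [geom_sum (b ^ v) _]geom_sumS => /addnI E.
have ndvd w n : 0 < w -> ~~ (b %| geom_sum (b ^ w) n.+1).
  by move=> w_gt0; rewrite geom_sum_ndvd // dvdn_exp.
have eq_uv := @eq_expn_mul_ndvd b u v _ _ (ltnW b_gt1)
  (ndvd u s u_gt0) (ndvd v t v_gt0) E.
move: E; rewrite -{}eq_uv => /eqP; rewrite eqn_pmul2l // => /eqP.
by move/(geom_sum_inj _ (pow_gt0 u)) => ->.
Qed.

Lemma n_of_geom_sum B m s : n_of B m s = geom_sum (B ^ ord (m * s) B) s.
Proof. by apply: eq_bigr => j _; rewrite -expnM mulnC. Qed.

Theorem lemma5p2 (b k m r s s' : nat) :
  2 <= b -> 1 <= k -> 1 <= m -> coprime m b -> r < m ->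
  admissible b m r s -> admissible b m r s' -> s <> s' ->
  n_of (b ^ k) m s <> n_of (b ^ k) m s'.
Proof.
move=> b_gt1 k_gt0 m_gt0 co_mb _ [s_gt0 [_ co_sb]] [s'_gt0 [_ co_s'b]] neq_ss'.
have exponent_gt0 t : 0 < t -> coprime t b -> 0 < k * ord (m * t) (b ^ k).
  move=> t_gt0 co_tb; rewrite muln_gt0 k_gt0 ord_gt0 ?muln_gt0 ?m_gt0 //.
  by rewrite coprimeXl // coprime_sym coprimeMl co_mb.
rewrite !n_of_geom_sum -!expnM => /geom_sum_expn_inj eq_ss'.
by apply/neq_ss'/eq_ss'; rewrite ?exponent_gt0.
Qed.
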